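(* If a connected graph $G$ belongs to $\mathfrak{F}$, then $G\in\mathcal{P}$. That is, $\mathfrak{F}\subset\mathcal{P}$.
   Context: Graphs are finite, simple and undirected. $\mathbb{T}=\{z\in\mathbb{C}:|z|=1\}$, $\mathbb{I}=[0,2\pi)$. A $\mathbb{T}$-gain on $G$ is a map $\varphi$ from oriented edges to $\mathbb{T}$ with $\varphi(\overrightarrow{e_{ts}})=\varphi(\overrightarrow{e_{st}})^{-1}$; $A(\Phi)$ for $\Phi=(G,\varphi)$ is the Hermitian matrix with $(s,t)$ entry $\varphi(\overrightarrow{e_{st}})$ if $v_s\sim v_t$, else $0$; $\mathcal{T}_G$ is the set of all $\mathbb{T}$-gain graphs on $G$. $\Re(A)\ge0$ means the real part of every entry of $A$ is nonnegative. The gain of a directed cycle is the product of gains of its oriented edges. A rooted spanning tree $T$ with root $v_r$ induces the tree order ($v_x\le v_y$ iff $v_x$ is on the $T$-path from $v_r$ to $v_y$); $T$ is normal if adjacent vertices of $G$ are always comparable. The suitably oriented graph $\overrightarrow{G_T}$ orients each edge $e_{st}$ with $v_s\le v_t$ as $\overrightarrow{e_{st}}$ if $e_{st}\in E(T)$ and as $\overrightarrow{e_{ts}}$ otherwise; the $m-n+1$ fundamental cycles $C_j$ of $T$ (the unique cycle in $T$ plus a non-tree edge) become directed cycles $\overrightarrow{C_j(T)}$. For $r=(c_1,\dots,c_{m-n+1})\in\mathbb{I}^{m-n+1}$, $\mathcal{A}_T(r)=\{(G,\varphi)\in\mathcal{T}_G:\varphi(\overrightarrow{C_j(T)})=e^{ic_j}\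 \forall j\}$. $G$ has property GNRP (w.r.t. normal spanning tree $T$) if for each $r$ there is $\Phi\in\mathcal{A}_T(r)$ with $\Re(A(\Phi))\ge0$; $\mathcal{P}$ is the class of connected graphs with GNRP. The sum $G_1+G_2$ of subgraphs is the subgraph consisting of all edges in $G_1$ or $G_2$. A fundamental subgraph of $G$ w.r.t. $T$ is the sum $C_1+\cdots+C_s$ of a maximal collection of fundamental cycles such that the intersection of $C_1+\cdots+C_s$ with $T$ is a subtree. A fundamental subgraph built from fundamental cycles $C_1,\dots,C_s$ has the distinguished edge property (DEP) if these cycles can be ordered $C_{k_1},\dots,C_{k_s}$ so that $|E(C_{k_i})\setminus E(C_{k_1}+\cdots+C_{k_{i-1}})|>1$ for all $i=2,\dots,s$. A connected graph $G$ has DEP if every fundamental subgraph of $G$ with respect to a normal spanning tree $T$ has DEP; $\mathfrak{F}$ is the collection of connected graphs with DEP. *)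

From HB Require Import structures.
From mathcomp Require Import all_boot all_order all_algebra.
From mathcomp Require Import boolp reals trigo.
From mathcomp Require Import complex.
Set Implicit Arguments. Unset Strict Implicit. Unset Printing Implicit Defensive.
Import Order.TTheory GRing.Theory Num.Theory.
Local Open Scope ring_scope.

Definition simple_graph (T : finType) (e : rel T) : Prop :=
  symmetric e /\ irreflexive e.

Definition graph_connected (T : finType) (e : rel T) : Prop :=
  forall x y : T, connect e x y.

Definition spanning_tree (T : finType) (e tr : rel T) : Prop :=
  [/\ symmetric tr, subrel tr e, (forall x y : T, connect tr x y)
    & forall c : seq T, (2 < size c)%N -> uniq c -> ~~ cycle tr c].

Definition tree_path (T : finType) (tr : rel T) (s t : T) (q : seq T) : bool :=
  [&& path tr s q, last s q == t & uniq (s :: q)].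

Definition tree_le (T : finType) (tr : rel T) (rt x y : T) : Prop :=
  exists q : seq T, tree_path tr rt y q /\ x \in rt :: q.

Definition normal_tree (T : finType) (e tr : rel T) (rt : T) : Prop :=
  forall x y : T, e x y -> tree_le tr rt x y \/ tree_le tr rt y x.

(* Fundamental cycles are indexed by the non-tree edges {s,t}, written as the
   pair (s,t) with s <= t in the tree order. *)
Definition fc_key (T : finType) (e tr : rel T) (rt : T) (k : T * T) : Prop :=
  [/\ e k.1 k.2, ~~ tr k.1 k.2 & tree_le tr rt k.1 k.2].

Definition fc_keys (T : finType) (e tr : rel T) (rt : T) : {set T * T} :=
  [set k | `[< fc_key e tr rt k >]].

(* Edge set of the fundamental cycle of key (s,t), with every edge stored in
   its orientation in the suitably oriented graph: tree edges (a,b) with a <= b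
   (these are the consecutive pairs of the tree path from s down to t), and the
   non-tree edge oriented as (t,s). *)
Definition fc_edges (T : finType) (tr : rel T) (k : T * T) : {set T * T} :=
  [set ab | `[< exists q, tree_path tr k.1 k.2 q /\ ab \in zip (k.1 :: q) q >]]
  :|: [set (k.2, k.1)].

Definition fc_sum (T : finType) (tr : rel T) (S : {set T * T}) : {set T * T} :=
  \bigcup_(k in S) fc_edges tr k.

Definition edges_connected (T : finType) (F : {set T * T}) : Prop :=
  forall x y : T,
    (exists z, ((x, z) \in F) || ((z, x) \in F)) ->
    (exists z, ((y, z) \in F) || ((z, y) \in F)) ->
    connect (fun a b => ((a, b) \in F) || ((b, a) \in F)) x y.

Definition tree_edges (T : finType) (tr : rel T) : {set T * T} :=
  [set ab | tr ab.1 ab.2].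

Definition subtree_collection (T : finType) (e tr : rel T) (rt : T)
    (S : {set T * T}) : Prop :=
  S \subset fc_keys e tr rt /\ edges_connected (fc_sum tr S :&: tree_edges tr).

Definition fundamental_collection (T : finType) (e tr : rel T) (rt : T)
    (S : {set T * T}) : Prop :=
  subtree_collection e tr rt S /\
  forall S' : {set T * T}, subtree_collection e tr rt S' -> S \subset S' -> S' = S.

Definition collection_DEP (T : finType) (tr : rel T) (S : {set T * T}) : Prop :=
  exists ks : seq (T * T),
    [/\ uniq ks, [set k in ks] = S &
        forall (pre post : seq (T * T)) (k : T * T),
          ks = pre ++ k :: post -> pre != [::] ->
          (1 < #|fc_edges tr k :\: \bigcup_(k' <- pre) fc_edges tr k'|)%N].

Definition graph_DEP (T : finType) (e tr : rel T) (rt : T) : Prop :=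
  forall S : {set T * T}, fundamental_collection e tr rt S -> collection_DEP tr S.

Definition gain_graph (R : rcfType) (T : finType) (e : rel T)
    (phi : T -> T -> R[i]) : Prop :=
  forall x y : T, e x y -> `|phi x y| = 1 /\ phi y x = (phi x y)^-1.

(* Re(A(Phi)) >= 0: entries are phi x y on edges and 0 elsewhere. *)
Definition Re_adj_nonneg (R : rcfType) (T : finType) (e : rel T)
    (phi : T -> T -> R[i]) : Prop :=
  forall x y : T, e x y -> 0 <= complex.Re (phi x y).

Definition fc_gain_is (R : rcfType) (T : finType) (tr : rel T)
    (phi : T -> T -> R[i]) (k : T * T) (z : R[i]) : Prop :=
  forall q : seq T, tree_path tr k.1 k.2 q ->
    (\prod_(ab <- zip (k.1 :: q) q) phi ab.1 ab.2) * phi k.2 k.1 = z.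

Definition expi (R : realType) (c : R) : R[i] := (cos c +i* sin c)%C.

Definition graph_GNRP (R : realType) (T : finType) (e tr : rel T) (rt : T) : Prop :=
  forall r : T * T -> R,
    (forall k, k \in fc_keys e tr rt -> 0 <= r k < 2 * pi) ->
    exists phi : T -> T -> R[i],
      [/\ gain_graph e phi,
          (forall k, k \in fc_keys e tr rt -> fc_gain_is tr phi k (expi (r k)))
        & Re_adj_nonneg e phi].

From HB Require Import structures.
From mathcomp Require Import all_boot all_order all_algebra.
From mathcomp Require Import boolp reals trigo.
From mathcomp Require Import complex.
From mathcomp Require Import zify.
Set Implicit Arguments. Unset Strict Implicit. Unset Printing Implicit Defensive.
Import GRing.Theory Num.Theory.

(* Orient every tree edge away from the root (in a normal tree adjacent
   vertices have different depths) and the non-tree edge of the fundamental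
   cycle with key (s, t) from t to s.  Two fundamental subgraphs sharing a
   tree edge coincide by maximality, so concatenating DEP orders of all the
   fundamental subgraphs orders all fundamental cycles so that each one has a
   tree edge d lying on no earlier cycle: the cycle's non-tree edge is always
   new, so DEP provides a second new edge.  Go along this order: if S is the
   product of the gains already fixed on the cycle other than on d, pick w
   with w^2 = e^(ic)/S and Re w >= 0 and give the gain w both to d and to the
   non-tree edge.  Later cycles never revisit d nor that non-tree edge. *)
Lemma mem_zip_suffix (T : eqType) (s x : T) q A B ab : s :: q = A ++ x :: B ->
  ab \in zip (x :: B) B -> ab \in zip (s :: q) q.
Proof.
case: A => [[-> ->] //| a A [-> ->] ab_in].
by rewrite -cat_cons -[A ++ _]cat_rcons zip_cat ?size_rcons // mem_cat ab_in orbT.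
Qed.

Lemma mem_zip_nth (T : eqType) (x : T) q a b : (a, b) \in zip (x :: q) q ->
  exists2 i, (i < size q)%N & a = nth x (x :: q) i /\ b = nth x (x :: q) i.+1.
Proof.
have sz : size (zip (x :: q) q) = size q by rewrite size2_zip //= leqnSn.
case/(nthP (x, x)) => i; rewrite sz => iq.
by rewrite nth_zip_cond sz iq /= => -[<- <-]; exists i.
Qed.

Lemma path_zip (T : eqType) (r : rel T) x q a b :
  path r x q -> (a, b) \in zip (x :: q) q -> r a b.
Proof.
elim: q x => // y q IH x /= /andP[xy yq].
by rewrite inE => /predU1P[[-> ->] //|]; apply: IH.
Qed.

Section TreePaths.
Variables (T : finType) (tr : rel T).

Lemma tree_path_exists s t : connect tr s t -> exists q, tree_path tr s t q.
Proof.
case/connectP=> p hp ->; case: (shortenP hp) => p' hp' hu _.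
by exists p'; rewrite /tree_path hp' hu eqxx.
Qed.

Lemma tree_path_nil s t : tree_path tr s t [::] -> s = t.
Proof. by case/and3P=> _ /eqP. Qed.

Lemma tree_path_refl s q : tree_path tr s s q -> q = [::].
Proof.
case/and3P=> _; case/lastP: q => // q x; rewrite last_rcons => /eqP ->.
by rewrite /= mem_rcons mem_head.
Qed.

Lemma tree_path_cat s t A x B : tree_path tr s t (A ++ x :: B) ->
  tree_path tr s x (rcons A x) /\ tree_path tr x t B.
Proof.
case/and3P; rewrite -cat_rcons cat_path last_cat last_rcons => /andP[pA pB] lB u.
rewrite /tree_path pA pB lB last_rcons eqxx.
move: (u); rewrite -cat_cons cat_uniq => /andP[-> _].
by move: u => /= /andP[_]; rewrite cat_rcons cat_uniq => /and3P[_ _].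
Qed.

Lemma tree_path_take s t q i : tree_path tr s t q -> (i <= size q)%N ->
  tree_path tr s (nth s (s :: q) i) (take i q).
Proof.
case/and3P=> pq _ uq iq; rewrite /tree_path take_path //=.
rewrite (last_nth s) size_takel // -/(take i.+1 (s :: q)) nth_take // eqxx /=.
exact: (take_uniq i.+1 uq).
Qed.

Hypotheses (trS : symmetric tr)
  (trA : forall c : seq T, (2 < size c)%N -> uniq c -> ~~ cycle tr c).

Lemma tree_path_disjoint_eq s t X Y :
  tree_path tr s t (rcons X t) -> tree_path tr s t (rcons Y t) ->
  {in X, forall x, x \notin Y} -> X = Y.
Proof.
move=> /and3P[pX _ uX] /and3P[pY _ uY] XY.
have [/nilP|nXY] := eqVneq (X ++ Y) [::].
  by rewrite /nilp size_cat; case: X Y {pX uX pY uY XY} => [|? ?] [|? ?].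
have := trA (c := s :: X ++ t :: rev Y); rewrite /= size_cat /= size_rev.
have -> : (2 < (size X + (size Y).+1).+1)%N.
  by move: nXY; rewrite -size_eq0 size_cat addnS !ltnS lt0n.
move: uX uY; rewrite /= !rcons_uniq !mem_rcons !inE.
move=> /andP[/norP[st sX] /andP[tX uX]] /andP[/norP[_ sY] /andP[tY uY]].
rewrite mem_cat inE mem_rev !negb_or st sX sY cat_uniq /= rev_uniq mem_rev.
have -> : has (mem X) (rev Y) = false.
  by apply/negbTE/hasPn=> y; rewrite mem_rev; apply: contraL => /XY.
rewrite negb_or tX tY uX uY.
move=> /(_ isT isT)/negP[].
rewrite rcons_cat /= -cat_rcons cat_path pX last_rcons /=.
have := rev_path tr s (rcons Y t); rewrite last_rcons belast_rcons rev_cons => ->.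
by rewrite (eq_path (e' := tr)) // => x y; rewrite trS.
Qed.

Lemma tree_path_eq s t q1 q2 :
  tree_path tr s t q1 -> tree_path tr s t q2 -> q1 = q2.
Proof.
have [n] := ubnP (size q1 + size q2); elim: n => // n IH in s t q1 q2 *.
move=> lt_n h1 h2.
have [/hasP[x xq1 /andP[xq2 xt]] | /hasPn disj] :=
  boolP (has (fun x => (x \in q2) && (x != t)) q1).
  move: lt_n h1 h2; case/splitPr: xq1 => A1 B1; case/splitPr: xq2 => A2 B2.
  move=> lt_n /tree_path_cat[h1l h1r] /tree_path_cat[h2l h2r].
  have nonnil B : tree_path tr x t B -> (0 < size B)%N.
    by case: B => // /tree_path_nil xt'; rewrite xt' eqxx in xt.
  have := nonnil _ h1r; have := nonnil _ h2r.
  rewrite !size_cat /= in lt_n => B2n B1n.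
  have eA : rcons A1 x = rcons A2 x.
    by apply: IH h1l h2l; rewrite !size_rcons; lia.
  have eB : B1 = B2 by apply: IH h1r h2r; lia.
  by rewrite -!cat_rcons eA eB.
case/lastP: q1 h1 disj {lt_n} => [/tree_path_nil st|X a h1].
  by rewrite -st in h2 *; rewrite (tree_path_refl h2).
case/lastP: q2 h2 => [/tree_path_nil st|Y b h2 disj].
  by rewrite -st in h1 *; rewrite (tree_path_refl h1).
have at' : a = t by case/and3P: h1; rewrite last_rcons => _ /eqP.
have bt : b = t by case/and3P: h2; rewrite last_rcons => _ /eqP.
subst a b; congr rcons.
have tX : t \notin X by case/and3P: h1 => _ _; rewrite /= rcons_uniq => /and3P[].
apply: (tree_path_disjoint_eq h1 h2) => x xX.
have := disj x; rewrite mem_rcons inE xX orbT mem_rcons inE => /(_ isT).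
by apply: contra => xY; rewrite xY orbT; apply: contraNneq tX => <-.
Qed.

Lemma tree_path_suffix s t q A x B :
  tree_path tr s t q -> s :: q = A ++ x :: B -> tree_path tr x t B.
Proof. by move=> + E; case: A E => [|a A] [-> ->] // /tree_path_cat[]. Qed.

Variables (trC : forall x y, connect tr x y) (rt : T).

Definition tpath s t := xchoose (tree_path_exists (trC s t)).

Lemma tpathP s t : tree_path tr s t (tpath s t).
Proof. exact: xchooseP. Qed.

Lemma tpathE s t q : tree_path tr s t q -> tpath s t = q.
Proof. exact: tree_path_eq (tpathP s t). Qed.

Definition depth x := size (tpath rt x).

Lemma depth_nth y p i : tree_path tr rt y p -> (i <= size p)%N ->
  depth (nth rt (rt :: p) i) = i.
Proof.
by move=> yp ip; rewrite /depth (tpathE (tree_path_take yp ip)) size_takel.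
Qed.

Lemma depth_zip y p a b : tree_path tr rt y p -> (a, b) \in zip (rt :: p) p ->
  depth b = (depth a).+1.
Proof.
by move=> yp /mem_zip_nth[i ip [-> ->]]; rewrite !(depth_nth yp) // ltnW.
Qed.

Lemma tree_le_depth x y : tree_le tr rt x y -> x != y -> (depth x < depth y)%N.
Proof.
case=> p [yp xp] xy.
have dy : depth y = size p by rewrite /depth (tpathE yp).
have ix : (index x (rt :: p) <= size p)%N by rewrite -ltnS index_mem.
rewrite -(nth_index rt xp) (depth_nth yp ix) dy ltn_neqAle ix andbT.
apply: contra xy => /eqP xi.
by rewrite -(nth_index rt xp) xi -last_nth; case/and3P: yp => _ /eqP ->.
Qed.

Lemma tree_le_path_depth x y q a b : tree_le tr rt x y -> tree_path tr x y q ->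
  (a, b) \in zip (x :: q) q -> depth b = (depth a).+1.
Proof.
case=> p [yp xp] xq ab_q; apply: (depth_zip yp).
have [A [B E]] : exists A B, rt :: p = A ++ x :: B.
  by case/splitPr: xp => A B; exists A, B.
by rewrite (mem_zip_suffix E) // -(tree_path_eq xq (tree_path_suffix yp E)).
Qed.

End TreePaths.

Section UnitHalfPlane.
Variable R : rcfType.
Local Open Scope ring_scope.

Definition unit_Re_ge0 (w : R[i]) := `|w| = 1 /\ 0 <= complex.Re w.

Lemma unit_Re_ge01 : unit_Re_ge0 1.
Proof. by split; rewrite ?normr1. Qed.

Lemma unit_Re_ge0V w : unit_Re_ge0 w -> unit_Re_ge0 w^-1.
Proof.
case=> w1 w_ge0; split; first by rewrite normfV w1 invr1.
case: w w1 w_ge0 => a b /= _ a_ge0.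
by rewrite mulr_ge0 // invr_ge0 addr_ge0 // sqr_ge0.
Qed.

Lemma unit_Re_ge0_sqrt u : `|u| = 1 -> exists2 w, unit_Re_ge0 w & w * w = u.
Proof.
move=> u1; exists (sqrtc u); last by rewrite -expr2 sqr_sqrtc.
split; last by case: u u1 => a b _ /=; rewrite sqrtr_ge0.
have w2 : `|sqrtc u| ^+ 2 = 1 by rewrite -normrX sqr_sqrtc u1.
by apply/eqP; rewrite -(sqrp_eq1 (normr_ge0 _)) w2.
Qed.

End UnitHalfPlane.

Lemma norm_expi (R : realType) (c : R) : (`|expi c| = 1 :> R[i])%R.
Proof. by rewrite normc_def /expi /= cos2Dsin2 sqrtr1. Qed.

Section Distinguished.
Variables (K P : eqType) (Z : K -> seq P).
Local Open Scope ring_scope.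

Definition distinguished (L : seq K) := forall pre k post, L = pre ++ k :: post ->
  exists2 d, d \in Z k & {in pre, forall k', d \notin Z k'}.

Lemma distinguished_rcons L k : distinguished (rcons L k) ->
  distinguished L /\ exists2 d, d \in Z k & {in L, forall k', d \notin Z k'}.
Proof.
move=> dist; split; last by apply: (dist _ _ [::]); rewrite cats1.
by move=> pre k' post E; apply: (dist _ _ (rcons post k)); rewrite E rcons_cat.
Qed.

Lemma cat_eq_cons (L1 L2 pre post : seq K) k : L1 ++ L2 = pre ++ k :: post ->
  (exists post1, L1 = pre ++ k :: post1) \/
  (exists2 pre2, pre = L1 ++ pre2 & L2 = pre2 ++ k :: post).
Proof.
elim: L1 pre => [|a L1 IH] pre /=; first by right; exists pre.
case: pre => [[-> _]|b pre [-> /IH[[post1 ->]|[pre2 -> ->]]]].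
- by left; exists L1.
- by left; exists post1.
- by right; exists pre2.
Qed.

Lemma distinguished_cat L1 L2 : distinguished L1 -> distinguished L2 ->
  (forall k1 k2 d, k1 \in L1 -> k2 \in L2 -> d \in Z k2 -> d \notin Z k1) ->
  distinguished (L1 ++ L2).
Proof.
move=> dist1 dist2 disj pre k post /cat_eq_cons[[post1 /dist1]//|[pre2 -> E]].
have [d dk dpre2] := dist2 _ _ _ E; exists d => // k'.
have kL2 : k \in L2 by rewrite E mem_cat mem_head orbT.
by rewrite mem_cat => /orP[/disj/(_ kL2 dk)|/dpre2].
Qed.

Lemma distinguished_gains (R : rcfType) (z : K -> R[i]) L :
  (forall k, uniq (Z k)) -> (forall k, `|z k| = 1) -> distinguished L ->
  exists g : P -> R[i], exists h : K -> R[i],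
    [/\ forall p, unit_Re_ge0 (g p), forall k, unit_Re_ge0 (h k) &
        {in L, forall k, (\prod_(p <- Z k) g p) * h k = z k}].
Proof.
move=> Zu z1; elim/last_ind: L => [_|L k IH /distinguished_rcons[/IH+ [d dk dL]]].
  by exists (fun=> 1), (fun=> 1); split => // *; apply: unit_Re_ge01.
case=> g [h [gU hU gh]].
pose S := \prod_(p <- Z k | p != d) g p.
have S1 : `|S| = 1 by rewrite normr_prod big1 // => p _; case: (gU p).
have S0 : S != 0 by rewrite -normr_eq0 S1 oner_neq0.
have [w wU ww] : exists2 w, unit_Re_ge0 w & w * w = z k / S.
  by apply: unit_Re_ge0_sqrt; rewrite normf_div S1 z1 divr1.
exists (fun p => if p == d then w else g p), (fun k' => if k' == k then w else h k').
split=> [p|k'|k']; try by case: ifP.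
rewrite mem_rcons inE; have [-> _|_ /= k'L] := eqVneq.
  rewrite (bigD1_seq d) //= eqxx (eq_bigr g) => [|p /negbTE -> //].
  by rewrite -/S mulrAC ww mulrAC -mulrA divff // mulr1.
rewrite -(gh k' k'L); congr (_ * _); apply: eq_big_seq => p pk'.
by case: eqVneq pk' => // -> dk'; have := dL k' k'L; rewrite dk'.
Qed.

End Distinguished.

Section EdgeSets.
Variable T : finType.

Definition edge_rel (F : {set T * T}) : rel T :=
  fun a b => ((a, b) \in F) || ((b, a) \in F).

Lemma edge_rel_sym F : connect_sym (edge_rel F).
Proof. by apply: sym_connect_sym => a b; rewrite /edge_rel orbC. Qed.

Lemma connect_edge_relS (F1 F2 : {set T * T}) x y : F1 \subset F2 ->
  connect (edge_rel F1) x y -> connect (edge_rel F2) x y.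
Proof.
move/subsetP=> F12; apply: connect_sub => a b /orP[] /F12 ab;
  by apply: connect1; rewrite /edge_rel ab ?orbT.
Qed.

Lemma edges_connectedU (F1 F2 : {set T * T}) d :
  edges_connected F1 -> edges_connected F2 -> d \in F1 -> d \in F2 ->
  edges_connected (F1 :|: F2).
Proof.
case: d => d1 d2 conn1 conn2 dF1 dF2.
have to_d1 u : (exists z, ((u, z) \in F1 :|: F2) || ((z, u) \in F1 :|: F2)) ->
    connect (edge_rel (F1 :|: F2)) u d1.
  case=> z; rewrite !in_setU orbACA => /orP[uF|uF].
    apply: (connect_edge_relS (subsetUl F1 F2)); apply: conn1; first by exists z.
    by exists d2; rewrite dF1.
  apply: (connect_edge_relS (subsetUr F1 F2)); apply: conn2; first by exists z.
  by exists d2; rewrite dF2.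
move=> u v /to_d1 ud1 /to_d1 vd1; change (connect (edge_rel (F1 :|: F2)) u v).
by apply: connect_trans ud1 _; rewrite edge_rel_sym.
Qed.

Lemma connect_zip (x : T) q v :
  v \in x :: q -> connect (edge_rel [set ab in zip (x :: q) q]) x v.
Proof.
elim: q x => [|y q IH] x; first by rewrite inE => /eqP ->.
rewrite inE => /predU1P[-> //|/IH yv].
apply: (@connect_trans _ _ y); first by apply: connect1; rewrite /edge_rel !inE eqxx.
apply: connect_edge_relS yv; apply/subsetP => ab; rewrite !inE => ->.
by rewrite orbT.
Qed.

Lemma edges_connected_zip (x : T) q : edges_connected [set ab in zip (x :: q) q].
Proof.
have on_path u z : ((u, z) \in [set ab in zip (x :: q) q]) ||
    ((z, u) \in [set ab in zip (x :: q) q]) -> u \in x :: q.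
  rewrite !in_set => /orP[] /mem_zip_nth[i iq []] => [-> _|_ ->];
    apply: mem_nth => //; exact: ltnW.
move=> u v [z /on_path xu] [z' /on_path xv].
change (connect (edge_rel [set ab in zip (x :: q) q]) u v).
by apply: connect_trans (connect_zip xv); rewrite edge_rel_sym connect_zip.
Qed.

End EdgeSets.

Section FundamentalCycles.
Variables (T : finType) (e tr : rel T) (rt : T).
Hypotheses (eI : irreflexive e) (trS : symmetric tr)
  (trC : forall x y, connect tr x y)
  (trA : forall c : seq T, (2 < size c)%N -> uniq c -> ~~ cycle tr c).

Local Notation keys := (fc_keys e tr rt).
Local Notation tpath := (tpath trC).

Definition fc_tree_edges (k : T * T) : seq (T * T) :=
  zip (k.1 :: tpath k.1 k.2) (tpath k.1 k.2).

Lemma fc_keyP k : reflect (fc_key e tr rt k) (k \in keys).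
Proof. by rewrite in_set; apply: asboolP. Qed.

Lemma fc_edgesE k ab :
  (ab \in fc_edges tr k) = (ab \in fc_tree_edges k) || (ab == (k.2, k.1)).
Proof.
rewrite in_setU in_set1 in_set; congr orb.
apply/asboolP/idP => [[q [kq abq]]|abk].
  by rewrite /fc_tree_edges (tpathE trS trA trC kq).
by exists (tpath k.1 k.2); split; first exact: tpathP.
Qed.

Lemma fc_tree_edges_tree k a b : (a, b) \in fc_tree_edges k -> tr a b.
Proof.
by move=> abk; case/and3P: (tpathP trC k.1 k.2) => /path_zip/(_ abk).
Qed.

Lemma fc_tree_edges_uniq k : uniq (fc_tree_edges k).
Proof. by apply: zip_uniql; case/and3P: (tpathP trC k.1 k.2). Qed.

Lemma fc_tree_edges_exists k : k \in keys -> exists ab, ab \in fc_tree_edges k.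
Proof.
case/fc_keyP=> ek _ _; have := tpathP trC k.1 k.2; rewrite /fc_tree_edges.
case: (tpath _ _) => [/tree_path_nil k12|y q _]; first by rewrite k12 eI in ek.
by exists (k.1, y); rewrite mem_head.
Qed.

Lemma fc_sum_tree_edges (S : {set T * T}) : S \subset keys ->
  fc_sum tr S :&: tree_edges tr = \bigcup_(k in S) [set ab in fc_tree_edges k].
Proof.
move/subsetP=> SK; apply/setP=> [[a b]]; rewrite in_setI in_set /=.
apply/andP/bigcupP => [[/bigcupP[k kS]]|[k kS]].
  rewrite fc_edgesE => /orP[abk _|/eqP[-> ->]]; first by exists k; rewrite ?in_set.
  by case/fc_keyP: (SK k kS) => _ + _; rewrite trS => /negbTE->.
rewrite in_set => abk; split; last exact: fc_tree_edges_tree abk.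
by apply/bigcupP; exists k; rewrite ?fc_edgesE ?abk.
Qed.

Lemma subtree_collectionU (S1 S2 : {set T * T}) k1 k2 d :
  subtree_collection e tr rt S1 -> subtree_collection e tr rt S2 ->
  k1 \in S1 -> k2 \in S2 -> d \in fc_tree_edges k1 -> d \in fc_tree_edges k2 ->
  subtree_collection e tr rt (S1 :|: S2).
Proof.
move=> [S1K conn1] [S2K conn2] k1S1 k2S2 dk1 dk2.
have S12K : S1 :|: S2 \subset keys by rewrite subUset S1K.
split=> //; rewrite fc_sum_tree_edges // bigcup_setU.
rewrite fc_sum_tree_edges // in conn1; rewrite fc_sum_tree_edges // in conn2.
by apply: (edges_connectedU (d := d) conn1 conn2); apply/bigcupP;
  [exists k1 | exists k2]; rewrite ?in_set.
Qed.

Lemma fundamental_collection_eq (S1 S2 : {set T * T}) k1 k2 d :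
  fundamental_collection e tr rt S1 -> fundamental_collection e tr rt S2 ->
  k1 \in S1 -> k2 \in S2 -> d \in fc_tree_edges k1 -> d \in fc_tree_edges k2 ->
  S1 = S2.
Proof.
move=> [sub1 max1] [sub2 max2] k1S1 k2S2 dk1 dk2.
have sub12 := subtree_collectionU sub1 sub2 k1S1 k2S2 dk1 dk2.
by rewrite -(max1 _ sub12 (subsetUl _ _)) (max2 _ sub12 (subsetUr _ _)).
Qed.

Lemma fundamental_collection_exists k : k \in keys ->
  exists2 S, fundamental_collection e tr rt S & k \in S.
Proof.
move=> kK; pose P S := `[< subtree_collection e tr rt S >] && (k \in S).
have Pk : P [set k].
  rewrite /P set11 andbT; apply/asboolP; split; first by rewrite sub1set.
  by rewrite fc_sum_tree_edges ?sub1set // big_set1; apply: edges_connected_zip.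
case: (arg_maxnP (fun S : {set T * T} => #|S|) Pk) => S /andP[/asboolP subS kS] maxS.
exists S => //; split=> // S' subS' SS'.
apply/eqP; rewrite eq_sym eqEcard SS' /=; apply: maxS.
by rewrite /P (subsetP SS' _ kS) andbT; apply/asboolP.
Qed.


Lemma collection_DEP_distinguished S :
  fundamental_collection e tr rt S -> collection_DEP tr S ->
  exists2 ks, [set k in ks] = S & distinguished fc_tree_edges ks.
Proof.
move=> [[SK _] _] [ks [_ ksS ksDEP]]; exists ks => // pre k post E.
have kK : k \in keys.
  by apply: (subsetP SK); rewrite -ksS in_set E mem_cat mem_head orbT.
have [-> | pre0] := eqVneq pre [::].
  by have [d dk] := fc_tree_edges_exists kK; exists d.
have := ksDEP _ _ _ E pre0; set U := \bigcup_(k' <- pre) _ => new2.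
have : ~~ (fc_edges tr k :\: U \subset [set (k.2, k.1)]).
  by apply: contraL new2 => /subset_leq_card; rewrite cards1 -leqNgt.
case/subsetPn=> d; rewrite in_setD fc_edgesE in_set1.
case/andP=> dU /orP[dk _|/eqP-> ]; last by rewrite eqxx.
exists d => // k' k'pre; apply: contra dU => dk'.
by rewrite /U bigcup_seq; apply/bigcupP; exists k'; rewrite ?fc_edgesE ?dk'.
Qed.

Lemma distinguished_fundamental (cs : seq {set T * T}) : uniq cs ->
  (forall S, S \in cs -> fundamental_collection e tr rt S /\ collection_DEP tr S) ->
  exists2 L, distinguished fc_tree_edges L & [set k in L] = \bigcup_(S <- cs) S.
Proof.
elim: cs => [_ _|S cs IH /andP[Scs ucs] csP].
  exists [::]; first by move=> [|? ?] ? ? /(congr1 size)/eqP; rewrite size_cat addnS.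
  by rewrite big_nil; apply/setP=> k; rewrite !inE.
have [fS depS] := csP S (mem_head _ _).
have csP' S' : S' \in cs ->
    fundamental_collection e tr rt S' /\ collection_DEP tr S'.
  by move=> S'cs; apply: csP; rewrite inE S'cs orbT.
have [L distL LE] := IH ucs csP'.
have [ks ksS distks] := collection_DEP_distinguished fS depS.
exists (L ++ ks).
  apply: distinguished_cat => // k1 k2 d k1L k2ks dk2; apply/negP => dk1.
  have : k1 \in \bigcup_(S <- cs) S by rewrite -LE in_set.
  rewrite bigcup_seq => /bigcupP[S' S'cs k1S'].
  have k2S : k2 \in S by rewrite -ksS in_set.
  have E := fundamental_collection_eq (csP' S' S'cs).1 fS k1S' k2S dk1 dk2.
  by rewrite -E S'cs in Scs.
by apply/setP=> k; rewrite big_cons in_setU -ksS -LE !in_set mem_cat orbC.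
Qed.

Lemma keys_distinguished : graph_DEP e tr rt ->
  exists2 L, distinguished fc_tree_edges L & {subset keys <= L}.
Proof.
move=> DEP; pose cs := enum [set S | `[< fundamental_collection e tr rt S >]].
have csP S : S \in cs -> fundamental_collection e tr rt S /\ collection_DEP tr S.
  by rewrite mem_enum in_set => /asboolP fS; split; last exact: DEP.
have [L distL LE] := distinguished_fundamental (enum_uniq _) csP.
exists L => // k /fundamental_collection_exists[S fS kS].
have : k \in \bigcup_(S <- cs) S.
  rewrite bigcup_seq; apply/bigcupP; exists S => //.
  by rewrite mem_enum in_set; apply/asboolP.
by rewrite -LE in_set.
Qed.

Hypothesis nT : normal_tree e tr rt.
Local Notation depth := (depth trC rt).

Lemma edge_depth_neq x y : e x y -> depth x != depth y.
Proof.
move=> exy; have xy : x != y by apply: contraTneq exy => ->; rewrite eI.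
have [xley|ylex] := nT exy.
  by rewrite neq_ltn (tree_le_depth trS trA trC xley xy).
by rewrite neq_ltn (tree_le_depth trS trA trC ylex) ?orbT // eq_sym.
Qed.

Lemma fc_key_asym x y : (x, y) \in keys -> (y, x) \notin keys.
Proof.
case/fc_keyP=> /= exy _ xley; apply/fc_keyP => -[/= _ _ ylex].
have xy : x != y by apply: contraTneq exy => ->; rewrite eI.
have := tree_le_depth trS trA trC ylex; rewrite eq_sym => /(_ xy).
by move/(ltn_trans (tree_le_depth trS trA trC xley xy)); rewrite ltnn.
Qed.

Section Gains.
Variables (R : rcfType) (g h : T * T -> R[i]).
Local Open Scope ring_scope.

Definition gain_of x y : R[i] :=
  if tr x y then (if (depth x < depth y)%N then g (x, y) else (g (y, x))^-1)
  else if (y, x) \in keys then h (y, x)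
  else if (x, y) \in keys then (h (x, y))^-1 else 1.

Lemma gain_ofV x y : e x y -> gain_of y x = (gain_of x y)^-1.
Proof.
move=> exy; rewrite /gain_of trS; case: ifP => _.
  by have := edge_depth_neq exy; case: ltngtP => // _ _; rewrite invrK.
case kyx: ((y, x) \in keys); case kxy: ((x, y) \in keys); rewrite ?invrK ?invr1 //.
by have := fc_key_asym kxy; rewrite kyx.
Qed.

Hypotheses (gU : forall p, unit_Re_ge0 (g p)) (hU : forall k, unit_Re_ge0 (h k)).

Lemma gain_of_unit x y : unit_Re_ge0 (gain_of x y).
Proof.
rewrite /gain_of; case: ifP => _.
  by case: ifP => _; [exact: gU | exact/unit_Re_ge0V/gU].
case: ifP => _; first exact: hU.
by case: ifP => _; [exact/unit_Re_ge0V/hU | exact: unit_Re_ge01].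
Qed.

Lemma fc_gain_of k : k \in keys ->
  fc_gain_is tr gain_of k ((\prod_(ab <- fc_tree_edges k) g ab) * h k).
Proof.
move=> kK q kq; rewrite -(tpathE trS trA trC kq); case/fc_keyP: (kK) => _ ntr kle.
congr (_ * _); last by rewrite /gain_of trS (negbTE ntr) -surjective_pairing kK.
apply: eq_big_seq => -[a b] abk; rewrite /gain_of (fc_tree_edges_tree abk).
by rewrite (tree_le_path_depth trS trA trC kle (tpathP trC _ _) abk) ltnSn.
Qed.

End Gains.

Lemma graph_DEP_GNRP (R : realType) : graph_DEP e tr rt -> graph_GNRP R e tr rt.
Proof.
move=> DEP r _; have [L distL keysL] := keys_distinguished DEP.
have [g [h [gU hU gh]]] := distinguished_gains (z := fun k => expi (r k))
  fc_tree_edges_uniq (fun k => norm_expi (r k)) distL.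
exists (gain_of g h); split=> [x y exy|k kK|x y _].
- by split; [case: (gain_of_unit gU hU x y) | exact: gain_ofV].
- by rewrite -(gh k (keysL k kK)); apply: fc_gain_of.
- by case: (gain_of_unit gU hU x y).
Qed.

End FundamentalCycles.

Theorem theorem4p2 (R : realType) (T : finType) (e tr : rel T) (rt : T) :
  simple_graph e -> graph_connected e ->
  spanning_tree e tr -> normal_tree e tr rt ->
  graph_DEP e tr rt -> graph_GNRP R e tr rt.
Proof.
move=> [_ eI] _ [trS _ trC trA] nT.
exact: (graph_DEP_GNRP (R := R) eI trS trC trA nT).
Qed.
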